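(* In the two-project discovery model described in the context, let $\mu_1=-\mu<0\le c\mu=\mu_2$ with $\mu>0$ and $c\in[0,1)$, and let $\sigma_1<\sigma_2$. For $i\in\{1,2\}$ and each $\mu$, let $c_i(\mu)\in[0,1]$ be the cutoff such that, for $c\in[0,1)$, discovering project $i$ is preferred to no discovery iff $c>c_i(\mu)$. Define $$c^*:=\frac{\rho\sigma_2}{\sigma_1+2\rho\sigma_2},\qquad c^{**}:=\frac{\sigma_2}{\rho\sigma_1+2\sigma_2}.$$ Then: (0) When $w_1=1/2$, the cutoffs are constant in $\mu$, with $c_2(\mu)=c^{**}>c^*=c_1(\mu)$. The value of $\mu$ divides optimal discovery (among neither, project 1, project 2) into three regions: (1) Low $\mu$: no discovery is optimal if $c<\min\{c_1(\mu),c_2(\mu)\}$, and otherwise discovering some (not specified) project is optimal. (2) High $\mu$: there is $\bar\mu$ such that for all $\mu>\bar\mu$, $c_1(\mu)<c_2(\mu)$; no discovery is optimal if $c<c_1(\mu)$, discovering project 1 is optimal if $c\in(c_1(\mu),c_2(\mu))$, and discovering some (not specified) project is optimal if $c>c_2(\mu)$. (3) Limit $\mu$: for fixed $c$, for all sufficiently large $\mu$, no discovery is optimal if $c<c^*$, discovering project 1 is optimal if $c\in(c^*,c^{**})$, and discovering project 2 is optimal if $c>c^{**}$.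
   Context: Model. There are two projects $i\in\{1,2\}$. The agent's values $v=(v_1,v_2)\in\mathbb{R}^2$ are drawn from a common prior that is bivariate normal with means $\mu_1,\mu_2$, standard deviations $\sigma_1,\sigma_2>0$ and correlation $\rho\in(0,1)$. The principal has weights $w_1,w_2\in[0,1]$ with $w_1+w_2=1$. Timing: (1) the principal chooses whether to publicly discover $v_1$, $v_2$, or neither; (2) the chosen value is publicly revealed and the agent forms a posterior by Bayes' rule; (3) knowing the revealed value, the principal proposes a subset $S\subseteq\{1,2\}$; (4) the agent approves iff $\sum_{i\in S}\mathbb{E}[v_i\mid\text{revealed information}]\ge 0$; (5) the principal receives $\sum_{i\in S}w_i$ if approved and $0$ otherwise. The principal chooses the proposal to maximize her payoff given the revealed information; a discovery rule is optimal if it maximizes the principal's ex-ante expected payoff among the three rules, and ''preferred'' means strictly higher ex-ante expected payoff. *)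

From HB Require Import structures.
From mathcomp Require Import all_boot all_order all_algebra.
From mathcomp Require Import all_classical all_reals all_analysis.
From mathcomp Require Import normal_distribution.

Set Implicit Arguments.
Unset Strict Implicit.
Unset Printing Implicit Defensive.

Import Order.TTheory GRing.Theory Num.Theory.

Local Open Scope ring_scope.

Section Model.
Context {R : realType}.

Inductive rule := NoDisc | Disc1 | Disc2.

(* Principal's optimal payoff at stage (3)-(5), given the agent's posterior
   means m1, m2 and the weights (w1, w2 = 1 - w1): the maximum over the four
   proposals S = {}, {1}, {2}, {1,2} of (sum_{i in S} w_i) times the indicator
   that the agent approves S (sum_{i in S} m_i >= 0). *)
Definition opt_payoff (w1 m1 m2 : R) : R :=
  Num.max (Num.max 0 (if 0 <= m1 then w1 else 0))
          (Num.max (if 0 <= m2 then 1 - w1 else 0)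
                   (if 0 <= m1 + m2 then 1 else 0)).

(* Bayes posterior mean of v_j after v_i = x is revealed, for a bivariate
   normal prior:  E[v_j | v_i = x] = mu_j + rho * s_j / s_i * (x - mu_i). *)
Definition post_mean (muj sj mui si rho x : R) : R :=
  muj + rho * sj / si * (x - mui).

(* Ex-ante expected payoff of the principal under each discovery rule;
   the revealed value v_i has marginal law N(mu_i, s_i^2) (density
   normal_pdf mu_i s_i). *)
Definition ex_ante (mu1 mu2 s1 s2 rho w1 : R) (r : rule) : \bar R :=
  match r with
  | NoDisc => (opt_payoff w1 mu1 mu2)%:E
  | Disc1 => (\int[lebesgue_measure]_(x in [set: R])
        (opt_payoff w1 x (post_mean mu2 s2 mu1 s1 rho x)
          * normal_pdf mu1 s1 x)%:E)%E
  | Disc2 => (\int[lebesgue_measure]_(y in [set: R])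
        (opt_payoff w1 (post_mean mu1 s1 mu2 s2 rho y) y
          * normal_pdf mu2 s2 y)%:E)%E
  end.

Definition optimal (mu1 mu2 s1 s2 rho w1 : R) (r : rule) : Prop :=
  forall r' : rule, (ex_ante mu1 mu2 s1 s2 rho w1 r' <= ex_ante mu1 mu2 s1 s2 rho w1 r)%E.

Definition preferred (mu1 mu2 s1 s2 rho w1 : R) (r r' : rule) : Prop :=
  (ex_ante mu1 mu2 s1 s2 rho w1 r' < ex_ante mu1 mu2 s1 s2 rho w1 r)%E.

Definition is_cutoff (s1 s2 rho w1 : R) (d : rule) (cut : R -> R) : Prop :=
  forall mu : R, 0 < mu ->
    (0 <= cut mu <= 1) /\
    (forall c : R, 0 <= c < 1 ->
       (preferred (- mu) (c * mu) s1 s2 rho w1 d NoDisc <-> cut mu < c)).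

Definition cstar (s1 s2 rho : R) : R := rho * s2 / (s1 + 2 * rho * s2).
Definition cstarstar (s1 s2 rho : R) : R := s2 / (rho * s1 + 2 * s2).

End Model.

From HB Require Import structures.
From mathcomp Require Import all_boot all_order all_algebra.
From mathcomp Require Import all_classical all_reals all_analysis.
From mathcomp Require Import measurable_realfun normal_distribution.
From mathcomp Require Import ring lra.
Import Order.TTheory GRing.Theory Num.Theory numFieldNormedType.Exports.
Local Open Scope ring_scope.
Local Open Scope classical_set_scope.

(* Once v_i is revealed, both posterior means are affine and increasing in
   v_i, so the principal's optimal payoff is a step function of v_i: it is
   1 - w1 as soon as project 2 alone is approved and 1 once both projects are.
   With Q the standard normal tail, discovering v_i therefore gains
   w1 Q(a_i mu) - (1 - w1) Q(b_i mu) over no discovery, where the thresholds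
   a_i, b_i are explicit and affine in c.  For w1 = 1/2 the gain is positive
   iff a_i < b_i, i.e. iff c > c* (i = 1) or c > c** (i = 2).  As mu grows,
   Q(a mu) = o(Q(b mu)) whenever 0 <= b < a, so only the order of the
   thresholds matters; this gives the limit regions.  The low- and high-mu
   regions then follow from the defining property of the cutoffs and
   c* < c**. *)

Section normal_tail.
Context {R : realType}.
Implicit Types m s a b c x z : R.

Definition normal_tail z : R := fine (normal_prob 0 1 `[z, +oo[).

Lemma normal_tailE z : normal_prob 0 1 `[z, +oo[ = (normal_tail z)%:E.
Proof.
rewrite fineK // ge0_fin_numE ?measure_ge0 //.
exact: le_lt_trans (probability_le1 _ _) (ltry _).
Qed.

Lemma normal_tail_ge0 z : 0 <= normal_tail z.
Proof. by rewrite fine_ge0 ?measure_ge0. Qed.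

Lemma measurable_normal_pdf_EFin m s (D : set R) :
  measurable_fun D (fun x => (normal_pdf m s x)%:E).
Proof.
apply/measurable_EFinP; apply: measurable_funTS.
exact: measurable_normal_pdf.
Qed.

Lemma normal_pdf1E m x :
  normal_pdf m 1 x = normal_peak 1 * expR (- (x - m) ^+ 2 / 2).
Proof. by rewrite /normal_pdf oner_eq0 /normal_fun expr1n. Qed.

Lemma normal_pdf_affine m s x : 0 < s ->
  normal_pdf m s (m + s * x) * s = normal_pdf 0 1 x.
Proof.
move=> s0; rewrite normal_pdf1E /normal_pdf gt_eqF // /normal_fun /normal_peak.
have -> : - (m + s * x - m) ^+ 2 / (s ^+ 2 *+ 2) = - (x - 0) ^+ 2 / 2.
  by field; rewrite gt_eqF.
rewrite -!mulrnAr sqrtrM ?sqr_ge0 // sqrtr_sqr gtr0_norm // expr1n mul1r.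
set q := Num.sqrt _.
have q0 : q != 0 by rewrite gt_eqF // sqrtr_gt0 pmulrn_rgt0 // pi_gt0.
by field; rewrite q0 gt_eqF.
Qed.

Lemma normal_prob_itvcy m s z : 0 < s ->
  normal_prob m s `[m + s * z, +oo[ = (normal_tail z)%:E.
Proof.
move=> s0; pose F x := m + s * x.
have F' : F^`() = cst s.
  by apply/funext => x; rewrite derive1E derive_val add0r mul1r; exact: mulr1.
have cF : continuous F.
  by move=> x; apply: cvgD; [exact: cvg_cst | apply: cvgMr; exact: cvg_id].
rewrite -normal_tailE /normal_prob.
rewrite (@increasing_ge0_integration_by_substitutiony _ F); last 8 first.
- by move=> x y _ _ xy; rewrite /F ltrD2l ltr_pM2l.
- by rewrite F' => x _; exact: cvg_cst.
- by rewrite F'; exact: is_cvg_cst.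
- by rewrite F'; exact: is_cvg_cst.
- split; last exact: cvg_at_right_filter (cF z).
  move=> x _; apply: derivableD; first exact: derivable_cst.
  by apply: derivableM; [exact: derivable_cst | exact: derivable_id].
- apply/cvgryPge => A; near=> x.
  rewrite /F -lerBlDl -ler_pdivrMl //; near: x.
- by apply/continuous_subspaceT/continuous_normal_pdf; rewrite gt_eqF.
- by move=> x _; exact: normal_pdf_ge0.
by apply: eq_integral => x _; rewrite F' -(normal_pdf_affine m s x s0).
Unshelve. all: by end_near. Qed.

Lemma normal_tailN z : normal_tail (- z) = 1 - normal_tail z.
Proof.
have sym : normal_prob 0 1 `]-oo, - z[ = normal_prob 0 1 `[z, +oo[.
  rewrite /normal_prob integral_itv_bndo_bndc; last first.
    exact: measurable_normal_pdf_EFin.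
  rewrite ge0_integration_by_substitutionNy; last 2 first.
  - by apply: continuous_subspaceT; exact: continuous_normal_pdf (oner_neq0 _).
  - by move=> x _; exact: normal_pdf_ge0.
  by apply: eq_integral => x _; rewrite /= !normal_pdf1E !subr0 sqrrN.
apply: EFin_inj; rewrite EFinB -!normal_tailE.
have -> : `[- z, +oo[ = ~` `]-oo, - z[ by rewrite setCitvl.
by rewrite probability_setC // -sym.
Qed.

Lemma normal_tail_drop_ge a b c : a <= b -> 0 <= c ->
  (forall x, a <= x -> x < b -> c <= normal_pdf 0 1 x) ->
  c * (b - a) + normal_tail b <= normal_tail a.
Proof.
move=> ab c0 hc; rewrite -lee_fin EFinD -!normal_tailE.
have -> : `[a, +oo[ = `[a, b[ `|` `[b, +oo[ :> set R.
  by rewrite -itv_bndbnd_setU // bnd_simp.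
rewrite measureU //; last first.
  rewrite -subset0 => x [].
  by rewrite /= !in_itv /= andbT => /andP[_] /lt_geF ->.
apply: leeD => //.
have -> : (c * (b - a))%:E = (\int[lebesgue_measure]_(x in `[a, b[) c%:E)%E.
  rewrite integral_cst //= lebesgue_measure_itv /= lte_fin.
  by case: ltgtP ab => // -> _; rewrite subrr mulr0 mule0.
apply: ge0_le_integral => //.
- exact: measurable_normal_pdf_EFin.
- by move=> x; rewrite /= in_itv /= => /andP[ax xb]; rewrite lee_fin hc.
Qed.

Lemma normal_pdf01_ge x r : `|x| <= r ->
  normal_peak 1 * expR (- r ^+ 2 / 2) <= normal_pdf 0 1 x.
Proof.
move=> xr; rewrite normal_pdf1E subr0 ler_pM2l ?normal_peak_gt0 // ler_expR.
rewrite !mulNr lerN2 ler_pM2r //; move: xr; rewrite ler_norml; nra.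
Qed.

Lemma normal_tail_lt a b : a < b -> normal_tail b < normal_tail a.
Proof.
move=> ab; set c := normal_peak 1 * expR (- (`|a| + `|b|) ^+ 2 / 2).
have c0 : 0 < c by rewrite mulr_gt0 ?expR_gt0 ?normal_peak_gt0.
have hc x : a <= x -> x < b -> c <= normal_pdf 0 1 x.
  move=> ax xb; apply: normal_pdf01_ge; rewrite ler_norml.
  have := ler_norm b; have := ler_norm (- a); rewrite normrN.
  have := normr_ge0 a; have := normr_ge0 b.
  by move=> *; apply/andP; split; lra.
have := normal_tail_drop_ge a b c (ltW ab) (ltW c0) hc.
have : 0 < c * (b - a) by rewrite mulr_gt0 // subr_gt0.
lra.
Qed.

Lemma normal_tail_ltE a b : (normal_tail b < normal_tail a) = (a < b).
Proof.
case: (ltgtP a b) => [ab|ba|->]; first exact: normal_tail_lt.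
  exact/lt_gtF/normal_tail_lt.
exact: ltxx.
Qed.

Lemma normal_tail_le_expR z : 0 <= z -> normal_tail z <= expR (- z ^+ 2 / 2).
Proof.
(* On [z, +oo[ the standard density is at most e^(-z^2/2) times the density
   of N(z, 1). *)
move=> z0; rewrite -lee_fin -normal_tailE; set e := expR _.
apply: (@le_trans _ _
  (\int[lebesgue_measure]_(x in `[z, +oo[) (e%:E * (normal_pdf z 1 x)%:E))%E).
  apply: ge0_le_integral => //.
  - by move=> x _; rewrite lee_fin normal_pdf_ge0.
  - exact: measurable_normal_pdf_EFin.
  - by apply: emeasurable_funM => //; exact: measurable_normal_pdf_EFin.
  move=> x; rewrite /= in_itv /= andbT => zx.
  rewrite -EFinM lee_fin !normal_pdf1E subr0 mulrCA.
  rewrite ler_pM2l ?normal_peak_gt0 // -expRD ler_expR.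
  have : 0 <= z * (x - z) by rewrite mulr_ge0 // subr_ge0.
  nra.
rewrite ge0_integralZl_EFin //; last 3 first.
- by move=> x _; rewrite lee_fin normal_pdf_ge0.
- exact: measurable_normal_pdf_EFin.
- exact: expR_ge0.
rewrite -[leRHS]mule1 lee_wpmul2l ?lee_fin ?expR_ge0 //.
exact: (probability_le1 (normal_prob z 1)).
Qed.

Lemma normal_tail_ge_expR z : 0 <= z ->
  normal_peak 1 * expR (- (z + 1) ^+ 2 / 2) <= normal_tail z.
Proof.
move=> z0; set c := normal_peak 1 * expR _.
have c0 : 0 <= c by rewrite mulr_ge0 ?expR_ge0 ?normal_peak_ge0.
have hc x : z <= x -> x < z + 1 -> c <= normal_pdf 0 1 x.
  by move=> zx xz; apply: normal_pdf01_ge; rewrite ger0_norm; lra.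
have z1 : z <= z + 1 by rewrite lerDl.
have := normal_tail_drop_ge z (z + 1) c z1 c0 hc.
have := normal_tail_ge0 (z + 1); rewrite addrAC subrr add0r mulr1.
lra.
Qed.

Lemma expR_sqr_dominated (al be C : R) : 0 <= be < al -> 0 < C ->
  \forall mu \near +oo,
    expR (- (al * mu) ^+ 2 / 2) < C * expR (- (be * mu + 1) ^+ 2 / 2).
Proof.
(* For mu >= 1 with (al^2 - be^2) mu >= K, the exponent difference
   (be mu + 1)^2 - (al mu)^2 is at most 1 - (2 + 2 |ln C|) mu < 2 ln C. *)
move=> /andP[be0 beal] C0.
have d0 : 0 < al ^+ 2 - be ^+ 2 by rewrite subr_gt0; nra.
set K := 2 * be + 2 + 2 * `|ln C|.
have lnC : - `|ln C| <= ln C by rewrite lerNl -normrN ler_norm.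
have L0 := normr_ge0 (ln C).
near=> mu.
have mu1 : 1 <= mu by near: mu; apply: nbhs_pinfty_ge.
have Kmu : K <= (al ^+ 2 - be ^+ 2) * mu.
  by rewrite -ler_pdivrMl //; near: mu; apply: nbhs_pinfty_ge.
have h1 : 0 <= ((al ^+ 2 - be ^+ 2) * mu - K) * mu by rewrite mulr_ge0 //; lra.
have h2 : 0 <= (1 + `|ln C|) * (mu - 1) by rewrite mulr_ge0 //; lra.
rewrite -[C]lnK ?posrE // -expRD ltr_expR; rewrite /K in h1; nra.
Unshelve. all: by end_near. Qed.

Lemma normal_tail_dominated (al be A B : R) : 0 <= be < al -> 0 < A -> 0 < B ->
  \forall mu \near +oo, A * normal_tail (al * mu) < B * normal_tail (be * mu).
Proof.
move=> albe A0 B0; have /andP[be0 beal] := albe.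
have al0 : 0 <= al by apply: le_trans (ltW beal).
have p0 : 0 < normal_peak (1 : R) by rewrite normal_peak_gt0 ?oner_neq0.
have dom := expR_sqr_dominated _ _ _ albe (divr_gt0 (mulr_gt0 B0 p0) A0).
near=> mu.
have mu0 : 0 <= mu by near: mu; apply: nbhs_pinfty_ge.
have upper := normal_tail_le_expR _ (mulr_ge0 al0 mu0).
have lower := normal_tail_ge_expR _ (mulr_ge0 be0 mu0).
apply: le_lt_trans (ler_wpM2l (ltW A0) upper) _.
apply: lt_le_trans (ler_wpM2l (ltW B0) lower).
rewrite -ltr_pdivlMl // !mulrA [A^-1 * B]mulrC (mulrAC B).
by apply: (near dom mu).
Unshelve. all: by end_near. Qed.

Lemma integral_normal_step (m s u v a b : R) : 0 <= u -> 0 <= v ->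
  (\int[lebesgue_measure]_(x in [set: R])
     (((if b <= x then u else 0) + (if a <= x then v else 0))
        * normal_pdf m s x)%:E
  = u%:E * normal_prob m s `[b, +oo[ + v%:E * normal_prob m s `[a, +oo[)%E.
Proof.
move=> u0 v0; pose P c := (fun x => (normal_pdf m s x)%:E) \_ `[c, +oo[.
have mP c : measurable_fun setT (P c).
  apply/(measurable_restrictT _ _).1 => //.
  exact: measurable_normal_pdf_EFin.
have P0 c x : (0 <= P c x)%E.
  by rewrite /P /patch; case: ifP => // _; rewrite lee_fin normal_pdf_ge0.
have PE c x : P c x = ((if c <= x then 1 else 0) * normal_pdf m s x)%:E.
  rewrite /P /patch (_ : (x \in _) = (c <= x)); last first.
    by apply/idP/idP; rewrite in_setE /= in_itv /= andbT.
  by case: ifP; rewrite ?mul1r ?mul0r.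
transitivity
  (\int[lebesgue_measure]_(x in [set: R]) (u%:E * P b x + v%:E * P a x))%E.
  apply: eq_integral => x _; rewrite !PE -!EFinM -EFinD.
  case: ifP => _; case: ifP => _;
    by rewrite !(mul1r, mul0r, mulr0, addr0, add0r) // mulrDl.
rewrite ge0_integralD //; last 4 first.
- by move=> x _; apply: mule_ge0; [rewrite lee_fin | exact: P0].
- by apply: emeasurable_funM; [exact: measurable_cst | exact: mP].
- by move=> x _; apply: mule_ge0; [rewrite lee_fin | exact: P0].
- by apply: emeasurable_funM; [exact: measurable_cst | exact: mP].
rewrite !ge0_integralZl_EFin //; [|exact: mP..].
by rewrite /P -!integral_mkcond.
Qed.

End normal_tail.

(* Under the two side conditions, proposing project 1 alone is never better
   than the best of {2} and {1, 2}. *)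
Lemma opt_payoff_split {R : realType} (w m1 m2 : R) : 0 <= w <= 1 ->
  (0 <= m1 + m2 -> 0 <= m2) -> (m1 + m2 < 0 -> m1 < 0) ->
  opt_payoff w m1 m2 =
  (if 0 <= m2 then 1 - w else 0) + (if 0 <= m1 + m2 then w else 0).
Proof.
move=> /andP[w0 w1] h2 h1; rewrite /opt_payoff.
case: (leP 0 (m1 + m2)) => [/h2 -> | /h1 /lt_geF ->].
  rewrite subrK (max_r (_ : 1 - w <= 1)); last by lra.
  by apply: max_r; rewrite ge_max ler01; case: ifP => _; rewrite ?w1 ?ler01.
rewrite maxxx addr0; case: ifP => _; last by rewrite !maxxx.
have w1' : 0 <= 1 - w by rewrite subr_ge0.
by rewrite (max_l w1') (max_r w1').
Qed.

Lemma threshold_unique {R : realFieldType} (P : R -> Prop) (x y : R) :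
  0 <= x <= 1 -> 0 <= y <= 1 ->
  (forall c, 0 <= c < 1 -> P c <-> x < c) ->
  (forall c, 0 <= c < 1 -> P c <-> y < c) -> x = y.
Proof.
move=> /andP[x0 x1] /andP[y0 y1] Px Py.
have key u v : 0 <= u -> v <= 1 -> u < v ->
    (forall c, 0 <= c < 1 -> P c <-> u < c) ->
    (forall c, 0 <= c < 1 -> P c <-> v < c) -> False.
  move=> u0 v1 uv Pu Pv.
  have c01 : 0 <= (u + v) / 2 < 1 by apply/andP; split; lra.
  by have := (Pv _ c01).1 ((Pu _ c01).2 ltac:(lra)); lra.
case: (ltgtP x y) => [xy|yx|//]; exfalso.
  exact: key xy Px Py.
exact: key yx Py Px.
Qed.

Lemma near_imply {R : numFieldType} (P : Prop) (Q : R -> Prop) :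
  (P -> \forall x \near +oo, Q x) -> \forall x \near +oo, P -> Q x.
Proof.
case: (pselect P) => [p /(_ p)|np _]; first by apply: filterS => x.
by apply: nearW => x /np.
Qed.

Lemma near_pinfty_ex_pos {R : numFieldType} (P : R -> Prop) :
  (\forall x \near +oo, P x) -> exists M, forall x, 0 < x -> M < x -> P x.
Proof. by case=> M [_ PM]; exists M => x _ /PM. Qed.

Section discovery.
Context {R : realType}.
Variables (s1 s2 rho w : R).
Hypotheses (s1_gt0 : 0 < s1) (s2_gt0 : 0 < s2) (rho_gt0 : 0 < rho).
Hypotheses (w_gt0 : 0 < w) (w_lt1 : w < 1).

(* After v_i is revealed, let z := (v_i - E[v_i]) / s_i.  The agent approves
   both projects iff z >= zboth_i c * mu, and project 2 iff
   z >= - ztwo_i c * mu. *)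
Definition zboth1 c := (1 - c) / (s1 + rho * s2).
Definition ztwo1 c := c / (rho * s2).
Definition zboth2 c := (1 - c) / (s2 + rho * s1).
Definition ztwo2 c := c / s2.

Let s1_ge0 : 0 <= s1 := ltW s1_gt0.
Let s2_ge0 : 0 <= s2 := ltW s2_gt0.
Let srs1_gt0 : 0 < s1 + rho * s2 := addr_gt0 s1_gt0 (mulr_gt0 rho_gt0 s2_gt0).
Let srs2_gt0 : 0 < s2 + rho * s1 := addr_gt0 s2_gt0 (mulr_gt0 rho_gt0 s1_gt0).

Lemma zboth1_ge0 c : c <= 1 -> 0 <= zboth1 c.
Proof. by move=> c1; rewrite divr_ge0 ?subr_ge0 // ltW. Qed.

Lemma ztwo1_ge0 c : 0 <= c -> 0 <= ztwo1 c.
Proof. by move=> c0; rewrite divr_ge0 // ltW // mulr_gt0. Qed.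

Lemma zboth2_ge0 c : c <= 1 -> 0 <= zboth2 c.
Proof. by move=> c1; rewrite divr_ge0 ?subr_ge0 // ltW. Qed.

Lemma ztwo2_ge0 c : 0 <= c -> 0 <= ztwo2 c.
Proof. by move=> c0; rewrite divr_ge0. Qed.

Definition info_gain (a b : R) := w * normal_tail a - (1 - w) * normal_tail b.

Local Notation E mu c := (ex_ante (- mu) (c * mu) s1 s2 rho w).

Let w01 : 0 <= w <= 1. Proof. by apply/andP; split; apply: ltW. Qed.

Lemma ex_ante_NoDisc (mu c : R) : 0 < mu -> 0 <= c < 1 ->
  E mu c NoDisc = (1 - w)%:E.
Proof.
move=> mu0 /andP[c0 c1].
have cmu0 : 0 <= c * mu := mulr_ge0 c0 (ltW mu0).
have sum_lt0 : - mu + c * mu < 0 by nra.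
rewrite /= opt_payoff_split //; first by rewrite cmu0 (lt_geF sum_lt0) addr0.
by rewrite oppr_lt0.
Qed.

Lemma opt_payoff_Disc1 (mu c x : R) : 0 < mu -> 0 <= c < 1 ->
  opt_payoff w x (post_mean (c * mu) s2 (- mu) s1 rho x) =
  (if - mu + s1 * - (ztwo1 c * mu) <= x then 1 - w else 0) +
  (if - mu + s1 * (zboth1 c * mu) <= x then w else 0).
Proof.
move=> mu0 /andP[c0 c1].
set a := - mu + s1 * (zboth1 c * mu); set b := - mu + _.
set m2 := post_mean _ _ _ _ _ _.
have k0 : 0 < rho * s2 / s1 by rewrite divr_gt0 ?mulr_gt0.
have em2 : m2 = rho * s2 / s1 * (x - b).
  by rewrite /m2 /post_mean /b /ztwo1; field; rewrite !gt_eqF.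
have esum : x + m2 = (1 + rho * s2 / s1) * (x - a).
  by rewrite /m2 /post_mean /a /zboth1; field; rewrite !gt_eqF.
have ba : b <= a.
  rewrite lerD2l ler_pM2l //; apply: (@le_trans _ _ 0).
    by rewrite oppr_le0 mulr_ge0 ?ztwo1_ge0 // ltW.
  by rewrite mulr_ge0 ?zboth1_ge0 // ltW.
have a0 : a < 0.
  have -> : a = - (mu * (c * s1 + rho * s2) / (s1 + rho * s2)).
    by rewrite /a /zboth1; field; rewrite gt_eqF.
  have cs_gt0 : 0 < c * s1 + rho * s2.
    exact: ltr_wpDl (mulr_ge0 c0 s1_ge0) (mulr_gt0 rho_gt0 s2_gt0).
  by rewrite oppr_lt0 divr_gt0 // mulr_gt0.
have h2 : (0 <= m2) = (b <= x) by rewrite em2 pmulr_rge0 // subr_ge0.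
have h12 : (0 <= x + m2) = (a <= x).
  by rewrite esum pmulr_rge0 ?subr_ge0 // addr_gt0.
rewrite opt_payoff_split // ?h2 ?h12 //; first exact: le_trans ba.
by rewrite ltNge h12 -ltNge => /lt_trans; apply.
Qed.

Lemma opt_payoff_Disc2 (mu c y : R) : 0 < mu -> 0 <= c < 1 ->
  opt_payoff w (post_mean (- mu) s1 (c * mu) s2 rho y) y =
  (if c * mu + s2 * - (ztwo2 c * mu) <= y then 1 - w else 0) +
  (if c * mu + s2 * (zboth2 c * mu) <= y then w else 0).
Proof.
move=> mu0 /andP[c0 c1].
set a := c * mu + s2 * (zboth2 c * mu); set m1 := post_mean _ _ _ _ _ _.
have -> : c * mu + s2 * - (ztwo2 c * mu) = 0.
  by rewrite /ztwo2; field; rewrite gt_eqF.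
have k0 : 0 < rho * s1 / s2 by rewrite divr_gt0 ?mulr_gt0.
have esum : m1 + y = (1 + rho * s1 / s2) * (y - a).
  by rewrite /m1 /post_mean /a /zboth2; field; rewrite !gt_eqF.
have a0 : 0 <= a.
  apply: addr_ge0; first exact: mulr_ge0 c0 (ltW mu0).
  exact: mulr_ge0 s2_ge0 (mulr_ge0 (zboth2_ge0 c (ltW c1)) (ltW mu0)).
have h12 : (0 <= m1 + y) = (a <= y).
  by rewrite esum pmulr_rge0 ?subr_ge0 // addr_gt0.
rewrite opt_payoff_split // ?h12 //; first exact: le_trans a0.
move=> sum_lt0; case: (ltP y 0) => [y_lt0|]; last by lra.
have : rho * s1 / s2 * (y - c * mu) <= 0.
  by rewrite pmulr_rle0 // subr_le0 (le_trans (ltW y_lt0)) // mulr_ge0 // ltW.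
rewrite /m1 /post_mean; lra.
Qed.

Lemma ex_ante_Disc1 (mu c : R) : 0 < mu -> 0 <= c < 1 ->
  E mu c Disc1 = (1 - w + info_gain (zboth1 c * mu) (ztwo1 c * mu))%:E.
Proof.
move=> mu0 c01 /=.
under eq_integral => x _ do rewrite opt_payoff_Disc1 //.
rewrite integral_normal_step ?subr_ge0 ?ltW //.
rewrite !normal_prob_itvcy // normal_tailN.
by rewrite /info_gain -!EFinM -EFinD; congr (_%:E); ring.
Qed.

Lemma ex_ante_Disc2 (mu c : R) : 0 < mu -> 0 <= c < 1 ->
  E mu c Disc2 = (1 - w + info_gain (zboth2 c * mu) (ztwo2 c * mu))%:E.
Proof.
move=> mu0 c01 /=.
under eq_integral => y _ do rewrite opt_payoff_Disc2 //.
rewrite integral_normal_step ?subr_ge0 ?ltW //.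
rewrite !normal_prob_itvcy // normal_tailN.
by rewrite /info_gain -!EFinM -EFinD; congr (_%:E); ring.
Qed.

Lemma zboth1_lt_ztwo1 c : (zboth1 c < ztwo1 c) = (cstar s1 s2 rho < c).
Proof.
rewrite /zboth1 /ztwo1 /cstar ltr_pdivrMr // mulrAC ltr_pdivlMr ?mulr_gt0 //.
rewrite ltr_pdivrMr ?addr_gt0 ?mulr_gt0 //.
by rewrite -subr_gt0 -[RHS]subr_gt0; congr (0 < _); ring.
Qed.

Lemma ztwo1_lt_zboth1 c : (ztwo1 c < zboth1 c) = (c < cstar s1 s2 rho).
Proof.
rewrite /zboth1 /ztwo1 /cstar ltr_pdivrMr ?mulr_gt0 // mulrAC ltr_pdivlMr //.
rewrite ltr_pdivlMr ?addr_gt0 ?mulr_gt0 //.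
by rewrite -subr_gt0 -[RHS]subr_gt0; congr (0 < _); ring.
Qed.

Lemma zboth2_lt_ztwo2 c : (zboth2 c < ztwo2 c) = (cstarstar s1 s2 rho < c).
Proof.
rewrite /zboth2 /ztwo2 /cstarstar ltr_pdivrMr // mulrAC ltr_pdivlMr //.
rewrite ltr_pdivrMr ?addr_gt0 ?mulr_gt0 //.
by rewrite -subr_gt0 -[RHS]subr_gt0; congr (0 < _); ring.
Qed.

Lemma ztwo2_lt_zboth2 c : (ztwo2 c < zboth2 c) = (c < cstarstar s1 s2 rho).
Proof.
rewrite /zboth2 /ztwo2 /cstarstar ltr_pdivrMr // mulrAC ltr_pdivlMr //.
rewrite ltr_pdivlMr ?addr_gt0 ?mulr_gt0 //.
by rewrite -subr_gt0 -[RHS]subr_gt0; congr (0 < _); ring.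
Qed.

Hypotheses (s1_lt_s2 : s1 < s2) (rho_lt1 : rho < 1).

Lemma zboth2_lt_zboth1 c : c < 1 -> zboth2 c < zboth1 c.
Proof.
move=> c1; rewrite ltr_pM2l ?subr_gt0 // ltf_pV2 ?posrE // -subr_gt0.
rewrite (_ : _ - _ = (1 - rho) * (s2 - s1)); last by ring.
by rewrite mulr_gt0 // subr_gt0.
Qed.

Let w1_gt0 : 0 < 1 - w. Proof. by rewrite subr_gt0. Qed.

Lemma info_gain_lt0 al be : 0 <= be < al ->
  \forall mu \near +oo, info_gain (al * mu) (be * mu) < 0.
Proof.
move=> albe; apply: filterS (normal_tail_dominated _ _ _ _ albe w_gt0 w1_gt0).
by move=> mu; rewrite subr_lt0.
Qed.

Lemma info_gain_gt0 al be : 0 <= al < be ->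
  \forall mu \near +oo, 0 < info_gain (al * mu) (be * mu).
Proof.
move=> albe; apply: filterS (normal_tail_dominated _ _ _ _ albe w1_gt0 w_gt0).
by move=> mu; rewrite subr_gt0.
Qed.

Lemma info_gain_le a1 b1 a2 b2 : 0 <= a2 < a1 -> 0 <= a2 < b2 ->
  \forall mu \near +oo,
    info_gain (a1 * mu) (b1 * mu) <= info_gain (a2 * mu) (b2 * mu).
Proof.
move=> a21 a2b2.
have w2 : 0 < 2 * w by rewrite mulr_gt0.
have w2' : 0 < 2 * (1 - w) by rewrite mulr_gt0.
have := normal_tail_dominated _ _ _ _ a21 w2 w_gt0.
have := normal_tail_dominated _ _ _ _ a2b2 w2' w_gt0.
apply: filterS2 => mu h1 h2; rewrite /info_gain.
have := mulr_ge0 (ltW w1_gt0) (normal_tail_ge0 (b1 * mu)); lra.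
Qed.

Lemma info_gain_half_gt0 a b : w = 2^-1 -> (0 < info_gain a b) = (a < b).
Proof.
move=> w2; rewrite /info_gain w2 (_ : 1 - 2^-1 = 2^-1 :> R); last by field.
by rewrite -mulrBr pmulr_rgt0 ?invr_gt0 // subr_gt0 normal_tail_ltE.
Qed.

Lemma Disc1_le_NoDisc_near c : 0 <= c < 1 -> c < cstar s1 s2 rho ->
  \forall mu \near +oo, (E mu c Disc1 <= E mu c NoDisc)%E.
Proof.
move=> c01 cc; have /andP[c0 _] := c01; near=> mu.
have mu0 : 0 < mu by near: mu; exact: nbhs_pinfty_gt.
rewrite ex_ante_Disc1 // ex_ante_NoDisc // lee_fin gerDl; apply: ltW.
by near: mu; apply: info_gain_lt0; rewrite ztwo1_ge0 // ztwo1_lt_zboth1.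
Unshelve. all: by end_near. Qed.

Lemma NoDisc_lt_Disc1_near c : 0 <= c < 1 -> cstar s1 s2 rho < c ->
  \forall mu \near +oo, (E mu c NoDisc < E mu c Disc1)%E.
Proof.
move=> c01 cc; have /andP[_ c1] := c01; near=> mu.
have mu0 : 0 < mu by near: mu; exact: nbhs_pinfty_gt.
rewrite ex_ante_Disc1 // ex_ante_NoDisc // lte_fin ltrDl.
by near: mu; apply: info_gain_gt0; rewrite zboth1_ge0 ?ltW // zboth1_lt_ztwo1.
Unshelve. all: by end_near. Qed.

Lemma Disc2_le_NoDisc_near c : 0 <= c < 1 -> c < cstarstar s1 s2 rho ->
  \forall mu \near +oo, (E mu c Disc2 <= E mu c NoDisc)%E.
Proof.
move=> c01 cc; have /andP[c0 _] := c01; near=> mu.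
have mu0 : 0 < mu by near: mu; exact: nbhs_pinfty_gt.
rewrite ex_ante_Disc2 // ex_ante_NoDisc // lee_fin gerDl; apply: ltW.
by near: mu; apply: info_gain_lt0; rewrite ztwo2_ge0 // ztwo2_lt_zboth2.
Unshelve. all: by end_near. Qed.

Lemma NoDisc_lt_Disc2_near c : 0 <= c < 1 -> cstarstar s1 s2 rho < c ->
  \forall mu \near +oo, (E mu c NoDisc < E mu c Disc2)%E.
Proof.
move=> c01 cc; have /andP[_ c1] := c01; near=> mu.
have mu0 : 0 < mu by near: mu; exact: nbhs_pinfty_gt.
rewrite ex_ante_Disc2 // ex_ante_NoDisc // lte_fin ltrDl.
by near: mu; apply: info_gain_gt0; rewrite zboth2_ge0 ?ltW // zboth2_lt_ztwo2.
Unshelve. all: by end_near. Qed.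

Lemma Disc1_le_Disc2_near c : 0 <= c < 1 -> cstarstar s1 s2 rho < c ->
  \forall mu \near +oo, (E mu c Disc1 <= E mu c Disc2)%E.
Proof.
move=> c01 cc; have /andP[_ c1] := c01; near=> mu.
have mu0 : 0 < mu by near: mu; exact: nbhs_pinfty_gt.
rewrite ex_ante_Disc1 // ex_ante_Disc2 // lee_fin lerD2l.
near: mu; apply: info_gain_le; rewrite zboth2_ge0 ?ltW //.
  exact: zboth2_lt_zboth1.
by rewrite zboth2_lt_ztwo2.
Unshelve. all: by end_near. Qed.

Lemma NoDisc_lt_Disc1_half mu c : w = 2^-1 -> 0 < mu -> 0 <= c < 1 ->
  (E mu c NoDisc < E mu c Disc1)%E = (cstar s1 s2 rho < c).
Proof.
move=> w2 mu0 c01; rewrite ex_ante_Disc1 // ex_ante_NoDisc // lte_fin ltrDl.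
by rewrite info_gain_half_gt0 // ltr_pM2r // zboth1_lt_ztwo1.
Qed.

Lemma NoDisc_lt_Disc2_half mu c : w = 2^-1 -> 0 < mu -> 0 <= c < 1 ->
  (E mu c NoDisc < E mu c Disc2)%E = (cstarstar s1 s2 rho < c).
Proof.
move=> w2 mu0 c01; rewrite ex_ante_Disc2 // ex_ante_NoDisc // lte_fin ltrDl.
by rewrite info_gain_half_gt0 // ltr_pM2r // zboth2_lt_ztwo2.
Qed.

Lemma cstar_gt0 : 0 < cstar s1 s2 rho.
Proof. by rewrite divr_gt0 ?mulr_gt0 ?addr_gt0 ?mulr_gt0. Qed.

Lemma cstarstar_lt1 : cstarstar s1 s2 rho < 1.
Proof.
rewrite ltr_pdivrMr ?addr_gt0 ?mulr_gt0 // mul1r -subr_gt0.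
rewrite (_ : _ - s2 = rho * s1 + s2) ?addr_gt0 ?mulr_gt0 //.
by ring.
Qed.

Lemma cstar_lt_cstarstar : cstar s1 s2 rho < cstarstar s1 s2 rho.
Proof.
rewrite ltr_pdivrMr ?addr_gt0 ?mulr_gt0 // mulrAC.
rewrite ltr_pdivlMr ?addr_gt0 ?mulr_gt0 // -subr_gt0.
rewrite (_ : _ - _ = (1 - rho) * (1 + rho) * (s1 * s2)).
  by rewrite !mulr_gt0 ?subr_gt0 ?addr_gt0.
by ring.
Qed.

Local Notation V m1 m2 := (ex_ante m1 m2 s1 s2 rho w).
Local Notation opt mu c := (optimal (- mu) (c * mu) s1 s2 rho w).

Lemma optimal_NoDisc m1 m2 : (V m1 m2 Disc1 <= V m1 m2 NoDisc)%E ->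
  (V m1 m2 Disc2 <= V m1 m2 NoDisc)%E -> optimal m1 m2 s1 s2 rho w NoDisc.
Proof. by move=> h1 h2 []. Qed.

Lemma optimal_Disc1 m1 m2 : (V m1 m2 NoDisc <= V m1 m2 Disc1)%E ->
  (V m1 m2 Disc2 <= V m1 m2 Disc1)%E -> optimal m1 m2 s1 s2 rho w Disc1.
Proof. by move=> h0 h2 []. Qed.

Lemma optimal_Disc2 m1 m2 : (V m1 m2 NoDisc <= V m1 m2 Disc2)%E ->
  (V m1 m2 Disc1 <= V m1 m2 Disc2)%E -> optimal m1 m2 s1 s2 rho w Disc2.
Proof. by move=> h0 h1 []. Qed.

Lemma optimal_Disc1_or_Disc2 m1 m2 :
  (V m1 m2 NoDisc < V m1 m2 Disc1)%E \/ (V m1 m2 NoDisc < V m1 m2 Disc2)%E ->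
  optimal m1 m2 s1 s2 rho w Disc1 \/ optimal m1 m2 s1 s2 rho w Disc2.
Proof.
move=> h; case: (leP (V m1 m2 Disc2) (V m1 m2 Disc1)) => [h21|/ltW h12].
  by left; apply: optimal_Disc1 => //; case: h => /ltW // /le_trans; apply.
by right; apply: optimal_Disc2 => //; case: h => /ltW // /le_trans; apply.
Qed.

Lemma cutoff_ltE {d cut} : is_cutoff s1 s2 rho w d cut ->
  forall mu c : R, 0 < mu -> 0 <= c < 1 ->
  (E mu c NoDisc < E mu c d)%E = (cut mu < c).
Proof.
move=> cutP mu c mu0 c01; have [_ /(_ c c01) pref] := cutP mu mu0.
by apply/idP/idP => /pref.
Qed.

Lemma cutoff_leE {d cut} : is_cutoff s1 s2 rho w d cut ->
  forall mu c : R, 0 < mu -> 0 <= c < 1 ->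
  (E mu c d <= E mu c NoDisc)%E = (c <= cut mu).
Proof. by move=> cutP mu c mu0 c01; rewrite !leNgt (cutoff_ltE cutP). Qed.

Variables (cut1 cut2 : R -> R).
Hypotheses (cut1P : is_cutoff s1 s2 rho w Disc1 cut1)
  (cut2P : is_cutoff s1 s2 rho w Disc2 cut2).

Let cstar01 : 0 <= cstar s1 s2 rho <= 1.
Proof.
by rewrite ltW ?cstar_gt0 // ltW // (lt_trans cstar_lt_cstarstar cstarstar_lt1).
Qed.

Lemma cutoff1_equal_weights (mu : R) : w = 2^-1 -> 0 < mu ->
  cut1 mu = cstar s1 s2 rho.
Proof.
move=> w2 mu0; have [cut01 _] := cut1P mu mu0.
apply: (threshold_unique (fun c => E mu c NoDisc < E mu c Disc1)%E) => //.
  by move=> c c01; rewrite (cutoff_ltE cut1P).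
by move=> c c01; rewrite NoDisc_lt_Disc1_half.
Qed.

Lemma cutoff2_equal_weights (mu : R) : w = 2^-1 -> 0 < mu ->
  cut2 mu = cstarstar s1 s2 rho.
Proof.
move=> w2 mu0; have [cut01 _] := cut2P mu mu0.
apply: (threshold_unique (fun c => E mu c NoDisc < E mu c Disc2)%E) => //.
- by rewrite !ltW ?cstarstar_lt1 // (lt_trans cstar_gt0 cstar_lt_cstarstar).
- by move=> c c01; rewrite (cutoff_ltE cut2P).
- by move=> c c01; rewrite NoDisc_lt_Disc2_half.
Qed.

Lemma optimal_low_mu (mu c : R) : 0 < mu -> 0 <= c < 1 ->
  (c < Num.min (cut1 mu) (cut2 mu) -> opt mu c NoDisc) /\
  (Num.min (cut1 mu) (cut2 mu) < c -> opt mu c Disc1 \/ opt mu c Disc2).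
Proof.
move=> mu0 c01; split.
  rewrite lt_min => /andP[/ltW c1 /ltW c2].
  by apply: optimal_NoDisc; rewrite ?(cutoff_leE cut1P) ?(cutoff_leE cut2P).
rewrite gt_min => h; apply: optimal_Disc1_or_Disc2.
by rewrite (cutoff_ltE cut1P) // (cutoff_ltE cut2P) //; apply/orP.
Qed.

Lemma cutoffs_lt_near : \forall mu \near +oo, cut1 mu < cut2 mu.
Proof.
(* At the midpoint m of ]c*, c**[, discovering v_1 is eventually preferred to
   no discovery and discovering v_2 is not: cut1 mu < m <= cut2 mu. *)
pose m := (cstar s1 s2 rho + cstarstar s1 s2 rho) / 2.
have c0 := cstar_gt0; have cc1 := cstar_lt_cstarstar; have c1 := cstarstar_lt1.
have m01 : 0 <= m < 1 by apply/andP; split; rewrite /m; lra.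
near=> mu; have mu0 : 0 < mu by near: mu; exact: nbhs_pinfty_gt.
have cut1m : cut1 mu < m.
  rewrite -(cutoff_ltE cut1P) //; near: mu.
  by apply: NoDisc_lt_Disc1_near => //; rewrite /m; lra.
have mcut2 : m <= cut2 mu.
  rewrite -(cutoff_leE cut2P) //; near: mu.
  by apply: Disc2_le_NoDisc_near => //; rewrite /m; lra.
exact: lt_le_trans cut1m mcut2.
Unshelve. all: by end_near. Qed.

Lemma optimal_high_mu (mu c : R) : 0 < mu -> cut1 mu < cut2 mu -> 0 <= c < 1 ->
  (c < cut1 mu -> opt mu c NoDisc) /\
  (cut1 mu < c < cut2 mu -> opt mu c Disc1) /\
  (cut2 mu < c -> opt mu c Disc1 \/ opt mu c Disc2).
Proof.
move=> mu0 cut12 c01; split; [|split].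
- move=> c1; apply: optimal_NoDisc.
    by rewrite (cutoff_leE cut1P) // ltW.
  by rewrite (cutoff_leE cut2P) // ltW // (lt_trans c1).
- move=> /andP[c1 c2]; have h1 : (E mu c NoDisc < E mu c Disc1)%E.
    by rewrite (cutoff_ltE cut1P).
  apply: optimal_Disc1; first exact: ltW.
  by apply: le_trans (ltW h1); rewrite (cutoff_leE cut2P) // ltW.
- move=> c2; apply: optimal_Disc1_or_Disc2.
  by right; rewrite (cutoff_ltE cut2P).
Qed.

Lemma optimal_NoDisc_near c : 0 <= c < 1 -> c < cstar s1 s2 rho ->
  \forall mu \near +oo, opt mu c NoDisc.
Proof.
move=> c01 cc; near=> mu; apply: optimal_NoDisc; near: mu.
  exact: Disc1_le_NoDisc_near.
by apply: Disc2_le_NoDisc_near => //; exact: lt_trans cc cstar_lt_cstarstar.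
Unshelve. all: by end_near. Qed.

Lemma optimal_Disc1_near c : 0 <= c < 1 ->
  cstar s1 s2 rho < c < cstarstar s1 s2 rho ->
  \forall mu \near +oo, opt mu c Disc1.
Proof.
move=> c01 /andP[c1 c2]; near=> mu.
have h1 : (E mu c NoDisc < E mu c Disc1)%E.
  by near: mu; exact: NoDisc_lt_Disc1_near.
apply: optimal_Disc1; first exact: ltW.
by apply: le_trans (ltW h1); near: mu; exact: Disc2_le_NoDisc_near.
Unshelve. all: by end_near. Qed.

Lemma optimal_Disc2_near c : 0 <= c < 1 -> cstarstar s1 s2 rho < c ->
  \forall mu \near +oo, opt mu c Disc2.
Proof.
move=> c01 cc; near=> mu.
have h2 : (E mu c NoDisc < E mu c Disc2)%E.
  by near: mu; exact: NoDisc_lt_Disc2_near.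
apply: optimal_Disc2; first exact: ltW.
by near: mu; exact: Disc1_le_Disc2_near.
Unshelve. all: by end_near. Qed.

Lemma optimal_high_mu_near : \forall mu \near +oo,
  cut1 mu < cut2 mu /\
  (forall c, 0 <= c < 1 ->
     (c < cut1 mu -> opt mu c NoDisc) /\
     (cut1 mu < c < cut2 mu -> opt mu c Disc1) /\
     (cut2 mu < c -> opt mu c Disc1 \/ opt mu c Disc2)).
Proof.
near=> mu; have mu0 : 0 < mu by near: mu; exact: nbhs_pinfty_gt.
have cut12 : cut1 mu < cut2 mu by near: mu; exact: cutoffs_lt_near.
by split=> // c c01; exact: optimal_high_mu.
Unshelve. all: by end_near. Qed.

Lemma optimal_limit c : 0 <= c < 1 -> \forall mu \near +oo,
  (c < cstar s1 s2 rho -> opt mu c NoDisc) /\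
  (cstar s1 s2 rho < c < cstarstar s1 s2 rho -> opt mu c Disc1) /\
  (cstarstar s1 s2 rho < c -> opt mu c Disc2).
Proof.
move=> c01; near=> mu; split; [|split]; near: mu; apply: near_imply.
- exact: optimal_NoDisc_near.
- exact: optimal_Disc1_near.
- exact: optimal_Disc2_near.
Unshelve. all: by end_near. Qed.

End discovery.

Theorem theorem2 (R : realType) (s1 s2 rho w1 : R) (cut1 cut2 : R -> R) :
  0 < s1 -> s1 < s2 -> 0 < rho < 1 -> 0 < w1 < 1 ->
  is_cutoff s1 s2 rho w1 Disc1 cut1 ->
  is_cutoff s1 s2 rho w1 Disc2 cut2 ->
  (* (0) equal weights: constant cutoffs *)
  (w1 = 2^-1 ->
     (forall mu : R, 0 < mu ->
        cut2 mu = cstarstar s1 s2 rho /\ cut1 mu = cstar s1 s2 rho) /\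
     cstar s1 s2 rho < cstarstar s1 s2 rho) /\
  (* (1) low mu (the description is valid for every mu > 0) *)
  (forall mu c : R, 0 < mu -> 0 <= c < 1 ->
     (c < Num.min (cut1 mu) (cut2 mu) ->
        optimal (- mu) (c * mu) s1 s2 rho w1 NoDisc) /\
     (Num.min (cut1 mu) (cut2 mu) < c ->
        optimal (- mu) (c * mu) s1 s2 rho w1 Disc1 \/
        optimal (- mu) (c * mu) s1 s2 rho w1 Disc2)) /\
  (* (2) high mu *)
  (exists mubar : R, forall mu : R, 0 < mu -> mubar < mu ->
     cut1 mu < cut2 mu /\
     (forall c : R, 0 <= c < 1 ->
        (c < cut1 mu -> optimal (- mu) (c * mu) s1 s2 rho w1 NoDisc) /\
        (cut1 mu < c < cut2 mu -> optimal (- mu) (c * mu) s1 s2 rho w1 Disc1) /\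
        (cut2 mu < c ->
           optimal (- mu) (c * mu) s1 s2 rho w1 Disc1 \/
           optimal (- mu) (c * mu) s1 s2 rho w1 Disc2))) /\
  (* (3) limit mu *)
  (forall c : R, 0 <= c < 1 ->
     exists M : R, forall mu : R, 0 < mu -> M < mu ->
       (c < cstar s1 s2 rho -> optimal (- mu) (c * mu) s1 s2 rho w1 NoDisc) /\
       (cstar s1 s2 rho < c < cstarstar s1 s2 rho ->
          optimal (- mu) (c * mu) s1 s2 rho w1 Disc1) /\
       (cstarstar s1 s2 rho < c -> optimal (- mu) (c * mu) s1 s2 rho w1 Disc2)).
Proof.
move=> s1_gt0 s1_lt_s2 /andP[rho_gt0 rho_lt1] /andP[w_gt0 w_lt1] cut1P cut2P.
have s2_gt0 := lt_trans s1_gt0 s1_lt_s2.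
split.
  move=> w2; split; last exact: cstar_lt_cstarstar.
  move=> mu mu0; split; first exact: (cutoff2_equal_weights s1 s2 rho w1).
  exact: (cutoff1_equal_weights s1 s2 rho w1).
split; first by move=> mu c mu0 c01; exact: optimal_low_mu.
split; first by apply: near_pinfty_ex_pos; exact: optimal_high_mu_near.
by move=> c c01; apply: near_pinfty_ex_pos; exact: optimal_limit.
Qed.
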